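(* Let $G$ be a connected saturated graph with $|E(G)| \leq |V(G)|$ and $2 \leq mp(G) \leq 3$. Then: (1) if $mp(G)=2$, then $G = K_{1,\Delta}$ for some $\Delta\ge 1$, and if $\Delta \geq 2$ then $mp(G+e)=3$ for every pair $e$ of non-adjacent vertices of $G$; (2) if $mp(G)=3$, then $G = K_3$.
   Context: All graphs are finite and simple. A degree monotone path in a graph $G$ is a path $v_1v_2\ldots v_m$ such that $\deg(v_1)\le \cdots\le \deg(v_m)$ or $\deg(v_1)\ge \cdots\ge \deg(v_m)$; its length is its number of vertices. $mp(G)$ denotes the maximum length of a degree monotone path in $G$. A graph $G$ is saturated if $mp(G+e)>mp(G)$ for every pair $e$ of non-adjacent vertices of $G$, where $G+e$ is $G$ with the edge $e$ added (complete graphs are saturated vacuously). *)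

From mathcomp Require Import all_boot.
Set Implicit Arguments. Unset Strict Implicit. Unset Printing Implicit Defensive.

Definition simple_graph (T : finType) (e : rel T) : Prop :=
  symmetric e /\ irreflexive e.

Definition deg (T : finType) (e : rel T) (x : T) : nat := #|[set y | e x y]|.

Definition nedges (T : finType) (e : rel T) : nat :=
  #|[set E : {set T} | [exists x, exists y, e x y && (E == [set x; y])]]|.

Definition connected (T : finType) (e : rel T) : Prop :=
  forall x y : T, connect e x y.

Definition dm_path (T : finType) (e : rel T) (s : seq T) : bool :=
  [&& uniq s, sorted e s &
      sorted leq (map (deg e) s) || sorted geq (map (deg e) s)].

(* mp(G): maximum number of vertices of a degree monotone path
   (a path has at most #|T| vertices, so the max over 0..#|T| is exact) *)
Definition mp (T : finType) (e : rel T) : nat :=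
  \max_(i < #|T|.+1 | [exists p : i.-tuple T, dm_path e p]) i.

Definition add_edge (T : finType) (e : rel T) (u v : T) : rel T :=
  fun x y => [|| e x y, (x == u) && (y == v) | (x == v) && (y == u)].

Definition saturated (T : finType) (e : rel T) : Prop :=
  forall u v : T, u != v -> ~~ e u v -> mp e < mp (add_edge e u v).

Definition is_star (T : finType) (e : rel T) (c : T) : Prop :=
  forall x y : T, e x y = ((x == c) && (y != c)) || ((y == c) && (x != c)).

Definition is_K3 (T : finType) (e : rel T) : Prop :=
  #|T| = 3 /\ forall x y : T, e x y = (x != y).

(* A degree monotone path can run through a vertex only if that vertex is not a
   strict local extremum of the degree.  So if adding a non-edge uv turns u and v
   into strict extrema, or puts them in a pendant pair (two leaves with a common
   neighbour, or a leaf followed by a vertex of degree 2) hanging off a strict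
   extremum, then long degree monotone paths of G + uv already live in G, against
   saturation.  Since |E| <= |V|, the degrees exceed 2 in total by at most the number
   of leaves.  If mp(G) = 2, every vertex of degree at least 2 is a strict extremum,
   and a second such vertex besides one of maximum degree would allow a forbidden
   edge to a leaf, so G is a star; in a star every non-edge joins two leaves.  If
   mp(G) = 3 and G has a leaf, let x have maximum degree: a leaf away from x, or a
   local maximum of degree >= 2 other than x, allows a forbidden edge, and otherwise
   the degree budget leaves only a triangle through x or a short path climbing to x,
   both impossible.  Without leaves G is 2-regular, and the only cycle without a
   monotone path on four vertices is the triangle. *)

From mathcomp Require Import all_boot zify.
Set Implicit Arguments. Unset Strict Implicit. Unset Printing Implicit Defensive.

Definition mono3 (a b c : nat) : Prop := (a <= b /\ b <= c) \/ (c <= b /\ b <= a).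
Definition mono4 (a b c d : nat) : Prop :=
  (a <= b /\ b <= c /\ c <= d) \/ (d <= c /\ c <= b /\ b <= a).

(* [i] and [j] are the degree increments of the two ends caused by an added edge. *)
Lemma mono3_drop_ends a b c (i j : bool) : mono3 (a + i) b (c + j) ->
  (i -> a + i != b) -> (j -> c + j != b) -> mono3 a b c.
Proof.
rewrite /mono3; case: i; case: j => /= M ib jb;
  try (have := ib isT); try (have := jb isT); lia.
Qed.

Lemma mono4_drop_ends a b c d (i j : bool) : mono4 (a + i) b c (d + j) ->
  (i -> a + i != b) -> (j -> d + j != c) -> mono4 a b c d.
Proof.
rewrite /mono4; case: i; case: j => /= M ib jc;
  try (have := ib isT); try (have := jc isT); lia.
Qed.

Section MonotonePaths.
Variables (T : finType) (e : rel T).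

Definition dm3 (a b c : T) : Prop :=
  [/\ [/\ a != b, a != c & b != c], e a b, e b c & mono3 (deg e a) (deg e b) (deg e c)].

Definition dm4 (a b c d : T) : Prop :=
  [/\ [/\ a != b, a != c & a != d], [/\ b != c, b != d & c != d],
      [/\ e a b, e b c & e c d] & mono4 (deg e a) (deg e b) (deg e c) (deg e d)].

Lemma dm3P a b c : dm_path e [:: a; b; c] <-> dm3 a b c.
Proof.
rewrite /dm_path /dm3 /mono3 /= !inE !andbT; split.
- case/and3P => /andP [/norP [ab ac] bc] /andP [eab ebc] M; split => //.
  by case/orP: M => /andP [? ?]; [left | right].
- case=> [[ab ac bc] eab ebc M]; apply/and3P; split.
  + by rewrite bc (negbTE ab) (negbTE ac).
  + by rewrite eab ebc.
  + by case: M => [[? ?]|[? ?]]; apply/orP; [left|right]; apply/andP.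
Qed.

Lemma dm4P a b c d : dm_path e [:: a; b; c; d] <-> dm4 a b c d.
Proof.
rewrite /dm_path /dm4 /mono4 /= !inE !andbT; split.
- case/and3P => /and3P [/norP [ab /norP [ac ad]] /norP [bc bd] cd] /and3P [eab ebc ecd] M.
  by split => //; case/orP: M => /and3P [? ? ?]; [left | right].
- case=> [[ab ac ad] [bc bd cd] [eab ebc ecd] M]; apply/and3P; split.
  + by rewrite cd (negbTE ab) (negbTE ac) (negbTE ad) (negbTE bc) (negbTE bd).
  + by rewrite eab ebc ecd.
  + by case: M => [[? [? ?]]|[? [? ?]]]; apply/orP; [left|right]; apply/and3P.
Qed.

Lemma dm_path_size_le_mp s : dm_path e s -> size s <= mp e.
Proof.
move=> dms; have s_uniq : uniq s by case/and3P: dms.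
have s_small : size s < #|T|.+1 by rewrite ltnS -(card_uniqP s_uniq) max_card.
apply: (@leq_bigmax_cond _ _ (fun i : 'I_#|T|.+1 => nat_of_ord i) (Ordinal s_small)).
by apply/existsP; exists (in_tuple s).
Qed.

Lemma exists_dm_path_mp : exists2 s, dm_path e s & size s = mp e.
Proof.
pose P (i : 'I_#|T|.+1) := [exists p : i.-tuple T, dm_path e p].
have : 0 < #|P| by apply/card_gt0P; exists ord0; apply/existsP; exists [tuple].
case/(eq_bigmax_cond (fun i => nat_of_ord i)) => i /existsP [p dmp] mpE.
by exists p; rewrite ?size_tuple.
Qed.

Lemma mp_le_card : mp e <= #|T|.
Proof.
have [s /and3P [s_uniq _ _] <-] := exists_dm_path_mp.
by rewrite -(card_uniqP s_uniq) max_card.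
Qed.

Lemma dm_path_catl s1 s2 : dm_path e (s1 ++ s2) -> dm_path e s1.
Proof.
case/and3P; rewrite cat_uniq map_cat => /andP [s1_uniq _] /cat_sorted2 [s1_path _] M.
apply/and3P; split => //.
by case/orP: M => /cat_sorted2 [M _]; rewrite M ?orbT.
Qed.

Lemma mp_ge3 a b c : dm3 a b c -> 3 <= mp e.
Proof. by move/dm3P/dm_path_size_le_mp. Qed.

Lemma mp_ge4 a b c d : dm4 a b c d -> 4 <= mp e.
Proof. by move/dm4P/dm_path_size_le_mp. Qed.

Lemma dm3_of_mp : 3 <= mp e -> exists a b c, dm3 a b c.
Proof.
have [[|a [|b [|c s]]] dms <-] // := exists_dm_path_mp; exists a, b, c.
by apply/dm3P; apply: (@dm_path_catl _ s).
Qed.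

Lemma dm4_of_mp : 4 <= mp e -> exists a b c d, dm4 a b c d.
Proof.
have [[|a [|b [|c [|d s]]]] dms <-] // := exists_dm_path_mp; exists a, b, c, d.
by apply/dm4P; apply: (@dm_path_catl _ s).
Qed.

End MonotonePaths.

Section Neighbours.
Variables (T : finType) (e : rel T).

Lemma deg_gt0 v p : e v p -> 0 < deg e v.
Proof. by move=> evp; apply/card_gt0P; exists p; rewrite inE. Qed.

Lemma exists_nbr v : 0 < deg e v -> exists y, e v y.
Proof. by case/card_gt0P => y; rewrite inE; exists y. Qed.

Lemma exists_nbr_neq v p : 1 < deg e v -> exists2 q, e v q & q != p.
Proof.
rewrite /deg (cardsD1 p) => deg_v.
have : 0 < #|[set y | e v y] :\ p| by move: deg_v; case: (p \in _) => /=; lia.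
by case/card_gt0P => q; rewrite !inE => /andP [qp evq]; exists q.
Qed.

Lemma deg1_nbr v p z : deg e v = 1 -> e v p -> e v z -> z = p.
Proof.
rewrite /deg => /eqP /cards1P [y Ny] evp evz.
have : p \in [set y | e v y] by rewrite inE.
have : z \in [set y | e v y] by rewrite inE.
by rewrite Ny !inE => /eqP -> /eqP ->.
Qed.

Lemma deg2_nbr v p q z : deg e v = 2 -> e v p -> e v q -> p != q -> e v z -> z = p \/ z = q.
Proof.
rewrite /deg => /eqP /cards2P [y [y' [_ Ny]]] evp evq pq evz.
have : p \in [set y | e v y] by rewrite inE.
have : q \in [set y | e v y] by rewrite inE.
have : z \in [set y | e v y] by rewrite inE.
rewrite Ny !inE => /orP [] /eqP -> /orP [] /eqP Eq /orP [] /eqP Ep; subst;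
  rewrite ?eqxx // in pq; by [left | right].
Qed.

Lemma deg_ge2 q p r : e q p -> e q r -> p != r -> 1 < deg e q.
Proof.
move=> eqp eqr pr; rewrite /deg.
have /subset_leq_card : [set p; r] \subset [set y | e q y].
  by apply/subsetP => z; rewrite !inE => /orP [] /eqP ->.
by rewrite cards2 pr.
Qed.

Lemma exists_max_deg (p : T) : exists x, forall y, deg e y <= deg e x.
Proof. by exists [arg max_(i > p) deg e i]; case: arg_maxnP => // i _ max_i y; apply: max_i. Qed.

Lemma adj_neq (e_irr : irreflexive e) a b : e a b -> a != b.
Proof. by apply: contraTneq => ->; rewrite e_irr. Qed.

Definition strict_max z := forall y, e z y -> deg e y < deg e z.
Definition strict_min z := forall y, e z y -> deg e z < deg e y.
Definition strict_ext z := strict_max z \/ strict_min z.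

Hypothesis e_sym : symmetric e.

Lemma strict_ext_deg_neq p q : e p q -> strict_ext p -> deg e p != deg e q.
Proof. by move=> epq [ext_p|ext_p]; have := ext_p _ epq; lia. Qed.

Lemma strict_ext_not_inner p q r : e p q -> e q r ->
  mono3 (deg e p) (deg e q) (deg e r) -> ~ strict_ext q.
Proof.
rewrite /mono3 => epq eqr M; rewrite e_sym in epq.
by case=> ext_q; have := ext_q _ eqr; have := ext_q _ epq; lia.
Qed.

Lemma dm4_rev a b c d : dm4 e a b c d -> dm4 e d c b a.
Proof.
case=> [[ab ac ad] [bc bd cd] [eab ebc ecd] M].
split; last by rewrite /mono4 in M *; lia.
- by split; rewrite eq_sym.
- by split; rewrite eq_sym.
- by split; rewrite e_sym.
Qed.

Lemma dm4_inner_not_ext a b c d z : dm4 e a b c d -> strict_ext z -> z != b /\ z != c.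
Proof.
case=> [_ _ [eab ebc ecd] M] ext_z; rewrite /mono4 in M.
split; apply/eqP => Ez; subst z.
- by apply: (strict_ext_not_inner eab ebc) => //; rewrite /mono3; lia.
- by apply: (strict_ext_not_inner ebc ecd) => //; rewrite /mono3; lia.
Qed.

Section PendantPair.
Variables (x c1 c2 : T).
Hypotheses (ext_x : strict_ext x)
  (nbr_c1 : forall z, e c1 z -> z = x \/ z = c2)
  (nbr_c2 : forall z, e c2 z -> z = x \/ z = c1).

Lemma dm4_pendant_inner q0 q1 q2 q3 : dm4 e q0 q1 q2 q3 -> q1 != c1.
Proof.
move=> dmq; have [q1x q2x] := dm4_inner_not_ext dmq ext_x.
case: dmq => [[q01 q02 q03] [q12 q13 q23] [e01 e12 e23] _].
apply/eqP => E1; subst q1; rewrite e_sym in e01.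
have [E2|E2] := nbr_c1 e12; subst q2; first by rewrite eqxx in q2x.
have [E0|E0] := nbr_c1 e01; subst q0; last by rewrite eqxx in q02.
by have [E3|E3] := nbr_c2 e23; subst q3; rewrite eqxx in q03 q13.
Qed.

End PendantPair.

Lemma dm4_avoid_pendant x c1 c2 q0 q1 q2 q3 : strict_ext x ->
  (forall z, e c1 z -> z = x \/ z = c2) -> (forall z, e c2 z -> z = x \/ z = c1) ->
  dm4 e q0 q1 q2 q3 -> [/\ q0 != c1, q1 != c1, q2 != c1 & q3 != c1].
Proof.
move=> ext_x nbr_c1 nbr_c2 dmq; have dmq' := dm4_rev dmq.
have first_neq r0 r1 r2 r3 : dm4 e r0 r1 r2 r3 -> r0 != c1.
  move=> dmr; have [xr1 _] := dm4_inner_not_ext dmr ext_x.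
  have r1c2 := dm4_pendant_inner ext_x nbr_c2 nbr_c1 dmr.
  case: dmr => [_ _ [e01 _ _] _]; apply/eqP => E0; subst r0.
  by case: (nbr_c1 _ e01) => E1; subst r1; rewrite eqxx in xr1 r1c2.
split; [exact: first_neq dmq | | | exact: first_neq dmq'].
- exact: (dm4_pendant_inner ext_x nbr_c1 nbr_c2 dmq).
- exact: (dm4_pendant_inner ext_x nbr_c1 nbr_c2 dmq').
Qed.

Lemma no_dm4_two_non_minima x y q0 q1 q2 q3 :
  (forall z, [\/ z = x, z = y | strict_min z]) -> ~ dm4 e q0 q1 q2 q3.
Proof.
move=> minima dmq.
have [min1 min2] : ~ strict_min q1 /\ ~ strict_min q2.
  by split=> min_q; have := dm4_inner_not_ext dmq (or_intror min_q); rewrite eqxx => -[].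
case: dmq => [[q01 q02 q03] [q12 q13 q23] [e01 e12 e23] M].
have min_else z : z != q1 -> z != q2 -> strict_min z.
  move=> z1 z2; case: (minima z) => [Ez|Ez|//]; subst z;
  case: (minima q1) => [E1|E1|//]; case: (minima q2) => [E2|E2|//]; subst;
  by rewrite ?eqxx in z1 z2 q12.
have lt0 := min_else _ q01 q02 _ e01.
have lt3 : deg e q3 < deg e q2.
  by apply: min_else; rewrite 1?e_sym // eq_sym.
by rewrite /mono4 in M; lia.
Qed.

End Neighbours.

Section AddEdge.
Variables (T : finType) (e : rel T) (u v : T).
Hypotheses (e_sym : symmetric e) (e_irr : irreflexive e).
Hypotheses (uv_neq : u != v) (uv_nadj : ~~ e u v).
Local Notation f := (add_edge e u v).

Lemma add_edge_sym : symmetric f.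
Proof.
move=> x y; rewrite /add_edge e_sym; congr (_ || _).
by rewrite orbC; congr (_ || _); rewrite andbC.
Qed.

Lemma add_edgeP x y : f x y -> [\/ e x y, x = u /\ y = v | x = v /\ y = u].
Proof.
by case/or3P => [exy|/andP [/eqP -> /eqP ->]|/andP [/eqP -> /eqP ->]];
  [apply: Or31 | apply: Or32 | apply: Or33].
Qed.

Lemma add_edge_old x y : f x y -> x != u -> x != v -> e x y.
Proof. by case/add_edgeP => [//|[-> _]|[-> _]]; rewrite eqxx. Qed.

Lemma deg_add_edge z : deg f z = deg e z + ((z == u) || (z == v)).
Proof.
rewrite /deg; have [->|zu] /= := eqVneq z u.
  have -> : [set y | f u y] = v |: [set y | e u y].
    by apply/setP => y; rewrite !inE /add_edge eqxx (negbTE uv_neq) orbF orbC.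
  by rewrite cardsU1 inE (negbTE uv_nadj) addn1.
have [->|zv] /= := eqVneq z v.
  have -> : [set y | f v y] = u |: [set y | e v y].
    by apply/setP => y; rewrite !inE /add_edge eqxx eq_sym (negbTE uv_neq) orbC.
  by rewrite cardsU1 inE e_sym (negbTE uv_nadj) addn1.
by rewrite addn0; apply: eq_card => y; rewrite !inE /add_edge (negbTE zu) (negbTE zv) orbF.
Qed.

Lemma add_edge_strict_max : (forall y, e u y -> deg e y <= deg e u) ->
  deg e v < deg e u -> strict_max f u.
Proof.
move=> max_u vu y /add_edgeP [euy|[_ ->]|[uv _]]; last by move: uv_neq; rewrite uv eqxx.
- have yu : y != u by rewrite eq_sym (adj_neq e_irr euy).
  have yv : y != v by apply: contraNneq uv_nadj => <-.
  by rewrite !deg_add_edge eqxx (negbTE yu) (negbTE yv) /= addn0 addn1 ltnS max_u.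
- by rewrite !deg_add_edge !eqxx orbT /= !addn1.
Qed.

Lemma add_edge_strict_min : (forall y, e v y -> (deg e v).+2 <= deg e y) ->
  deg e v < deg e u -> strict_min f v.
Proof.
move=> min_v vu y /add_edgeP [evy|[vu' _]|[_ ->]]; first last.
- by rewrite !deg_add_edge !eqxx orbT /= !addn1.
- by move: uv_neq; rewrite vu' eqxx.
have yu : y != u by apply: contraNneq uv_nadj => <-; rewrite e_sym.
have yv : y != v by rewrite eq_sym (adj_neq e_irr evy).
by rewrite !deg_add_edge eqxx orbT (negbTE yu) (negbTE yv) addn1 addn0 min_v.
Qed.

Lemma dm3_add_edge p0 p1 p2 : dm3 f p0 p1 p2 -> p1 != u -> p1 != v ->
  ((p0 == u) || (p0 == v) -> deg f p0 != deg f p1) ->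
  ((p2 == u) || (p2 == v) -> deg f p2 != deg f p1) -> dm3 e p0 p1 p2.
Proof.
case=> [neq e01 e12 M] p1u p1v end0 end2; split => //.
- by rewrite e_sym; apply: add_edge_old p1u p1v; rewrite add_edge_sym.
- exact: add_edge_old e12 p1u p1v.
move: M end0 end2; rewrite !deg_add_edge (negbTE p1u) (negbTE p1v) /= addn0.
exact: mono3_drop_ends.
Qed.

Lemma dm4_add_edge p0 p1 p2 p3 : dm4 f p0 p1 p2 p3 ->
  p1 != u -> p1 != v -> p2 != u -> p2 != v ->
  ((p0 == u) || (p0 == v) -> deg f p0 != deg f p1) ->
  ((p3 == u) || (p3 == v) -> deg f p3 != deg f p2) -> dm4 e p0 p1 p2 p3.
Proof.
case=> [neq0 neq1 [e01 e12 e23] M] p1u p1v p2u p2v end0 end3; split => //.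
- split; last exact: add_edge_old e23 p2u p2v.
  + by rewrite e_sym; apply: add_edge_old p1u p1v; rewrite add_edge_sym.
  + exact: add_edge_old e12 p1u p1v.
move: M end0 end3; rewrite !deg_add_edge.
rewrite (negbTE p1u) (negbTE p1v) (negbTE p2u) (negbTE p2v) /= !addn0.
exact: mono4_drop_ends.
Qed.

Section ExtremalEnds.
Hypotheses (ext_u : strict_ext f u) (ext_v : strict_ext f v).

Lemma end_deg_neq p q : f p q -> (p == u) || (p == v) -> deg f p != deg f q.
Proof.
move=> fpq /orP [] /eqP E; subst p; [exact: strict_ext_deg_neq fpq ext_u |
  exact: strict_ext_deg_neq fpq ext_v].
Qed.

Lemma dm3_add_edge_ext p0 p1 p2 : dm3 f p0 p1 p2 -> dm3 e p0 p1 p2.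
Proof.
move=> dmp; have [_ f01 f12 M] := dmp.
have not_inner z : strict_ext f z -> p1 != z.
  by move=> ext_z; apply/eqP => E; subst z; exact: (strict_ext_not_inner add_edge_sym f01 f12 M).
apply: dm3_add_edge => //; [exact: not_inner | exact: not_inner | exact: end_deg_neq |].
by apply: end_deg_neq; rewrite add_edge_sym.
Qed.

Lemma dm4_add_edge_ext p0 p1 p2 p3 : dm4 f p0 p1 p2 p3 -> dm4 e p0 p1 p2 p3.
Proof.
move=> dmp; have [[u1 u2] [v1 v2]] := (dm4_inner_not_ext add_edge_sym dmp ext_u,
                                       dm4_inner_not_ext add_edge_sym dmp ext_v).
have [_ _ [f01 _ f23] _] := dmp.
apply: (dm4_add_edge dmp); rewrite 1?(eq_sym p1) 1?(eq_sym p2) //; first exact: end_deg_neq.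
by apply: end_deg_neq; rewrite add_edge_sym.
Qed.

Lemma mp_add_edge_ext : 2 <= mp e <= 3 -> mp f <= mp e.
Proof.
case/andP=> mp_ge2 mp_le3; rewrite leqNgt; apply/negP => mp_lt.
have [mp2|mp3] : mp e = 2 \/ mp e = 3 by lia.
- have /dm3_of_mp [a [b [c dma]]] : 3 <= mp f by lia.
  by have := mp_ge3 (dm3_add_edge_ext dma); lia.
- have /dm4_of_mp [a [b [c [d dma]]]] : 4 <= mp f by lia.
  by have := mp_ge4 (dm4_add_edge_ext dma); lia.
Qed.

End ExtremalEnds.

Lemma dm4_add_edge_twin_leaves x p0 p1 p2 p3 :
  deg e u = 1 -> deg e v = 1 -> e u x -> e v x ->
  (forall y, e x y -> (deg e y).+1 < deg e x) ->
  dm4 f p0 p1 p2 p3 -> dm4 e p0 p1 p2 p3.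
Proof.
move=> u_leaf v_leaf eux evx small_nbrs dmp.
have xu : x != u by rewrite eq_sym (adj_neq e_irr eux).
have xv : x != v by rewrite eq_sym (adj_neq e_irr evx).
have ext_x : strict_ext f x.
  left=> y /add_edge_old /(_ xu xv) exy; rewrite !deg_add_edge (negbTE xu) (negbTE xv).
  by have := small_nbrs _ exy; case: (_ || _); lia.
have nbr_u z : f u z -> z = x \/ z = v.
  by case/add_edgeP => [euz|[_ ->]|[uv _]]; [left; exact: deg1_nbr euz | right |
    move: uv_neq; rewrite uv eqxx].
have nbr_v z : f v z -> z = x \/ z = u.
  by case/add_edgeP => [evz|[vu _]|[_ ->]]; [left; exact: deg1_nbr evz | move: uv_neq;
    rewrite vu eqxx | right].
have [p0u p1u p2u p3u] := dm4_avoid_pendant add_edge_sym ext_x nbr_u nbr_v dmp.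
have [p0v p1v p2v p3v] := dm4_avoid_pendant add_edge_sym ext_x nbr_v nbr_u dmp.
by apply: dm4_add_edge; rewrite // ?(negbTE p0u) ?(negbTE p0v) ?(negbTE p3u) ?(negbTE p3v).
Qed.

Lemma dm4_add_edge_pendant w p0 p1 p2 p3 :
  deg e v = 1 -> e v w -> deg e w = 2 -> e w u ->
  (forall y, e u y -> deg e y <= deg e u) -> 1 < deg e u ->
  dm4 f p0 p1 p2 p3 -> dm4 e p0 p1 p2 p3.
Proof.
move=> v_leaf evw w_deg2 ewu max_u u_deg dmp.
have wu := adj_neq e_irr ewu.
have wv : w != v by rewrite eq_sym (adj_neq e_irr evw).
have ext_u : strict_ext f u by left; apply: add_edge_strict_max => //; rewrite v_leaf.
have nbr_v z : f v z -> z = u \/ z = w.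
  by case/add_edgeP => [evz|[vu _]|[_ ->]]; [right; exact: deg1_nbr evz | move: uv_neq;
    rewrite vu eqxx | left].
have nbr_w z : f w z -> z = u \/ z = v.
  move/add_edge_old/(_ wu wv) => ewz; rewrite e_sym in evw.
  by case: (deg2_nbr w_deg2 ewu evw uv_neq ewz) => ->; [left | right].
have [p0v p1v p2v p3v] := dm4_avoid_pendant add_edge_sym ext_u nbr_v nbr_w dmp.
have [up1 up2] := dm4_inner_not_ext add_edge_sym dmp ext_u.
have [_ _ [f01 _ f23] _] := dmp; rewrite add_edge_sym in f23.
apply: dm4_add_edge; rewrite // 1?(eq_sym p1) 1?(eq_sym p2) //.
- by rewrite (negbTE p0v) orbF => /eqP E; subst p0; exact: strict_ext_deg_neq f01 ext_u.
- by rewrite (negbTE p3v) orbF => /eqP E; subst p3; exact: strict_ext_deg_neq f23 ext_u.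
Qed.

End AddEdge.

Section Counting.
Variables (T : finType) (e : rel T).
Hypothesis e_irr : irreflexive e.

Lemma sum_deg_le_2nedges : \sum_v deg e v <= 2 * nedges e.
Proof.
pose D := [set p : T * T | e p.1 p.2].
have -> : \sum_v deg e v = #|D|.
  have -> : \sum_v deg e v = \sum_v \sum_(y | e v y) 1.
    by apply: eq_bigr => v _; rewrite /deg -sum1_card; apply: eq_bigl => y; rewrite inE.
  by rewrite pair_big_dep -sum1_card; apply: eq_bigl => -[x y]; rewrite inE.
pose edge_of (p : T * T) := ([set p.1; p.2], enum_rank p.1 < enum_rank p.2).
have edge_of_inj : {in D &, injective edge_of}.
  move=> [a b] [c d]; rewrite !inE /edge_of /= => eab ecd [abcd ranks].
  have ab := adj_neq e_irr eab.
  have mem2 z : z \in [set a; b] -> z = c \/ z = d.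
    by rewrite abcd !inE => /orP [] /eqP ->; [left | right].
  have [Ea|Ea] := mem2 a (setU11 _ _); have [Eb|Eb] := mem2 b (setU1r _ (set11 _));
    subst a b; rewrite ?eqxx // in ab *.
  have dc : enum_rank d != enum_rank c by rewrite (inj_eq enum_rank_inj).
  by move: ranks dc; rewrite -val_eqE /=; case: (ltngtP (enum_rank d) (enum_rank c)).
have <- := card_in_imset edge_of_inj.
pose Es := [set E : {set T} | [exists x, exists y, e x y && (E == [set x; y])]].
have /subset_leq_card : edge_of @: D \subset setX Es [set: bool].
  apply/subsetP => q /imsetP [[a b]]; rewrite inE /= => eab ->; rewrite !inE andbT.
  by apply/existsP; exists a; apply/existsP; exists b; rewrite eab eqxx.
by rewrite cardsX cardsT card_bool /nedges -/Es mulnC.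
Qed.

Lemma sum_deg_sub2_le_leaves : (forall v, 0 < deg e v) -> nedges e <= #|T| ->
  \sum_v (deg e v - 2) <= #|[set v | deg e v == 1]|.
Proof.
move=> deg_pos sparse; have := sum_deg_le_2nedges.
have split_sum : \sum_v (deg e v - 2) + \sum_(v : T) 2 =
                 \sum_v deg e v + \sum_v (deg e v == 1 : nat).
  rewrite -!big_split; apply: eq_bigr => v _ /=.
  by have := deg_pos v; case: (deg e v) => [|[|n]] //= _; lia.
have leaves : \sum_v (deg e v == 1 : nat) = #|[set v | deg e v == 1]|.
  by rewrite -sum1_card [RHS]big_mkcond; apply: eq_bigr => w _; rewrite inE; case: (_ == _).
have card_T : \sum_(v : T) 2 = #|T| * 2 by rewrite sum_nat_const.
by rewrite card_T in split_sum; lia.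
Qed.

Lemma deg2_of_no_leaf : (forall v, 0 < deg e v) -> nedges e <= #|T| ->
  (forall v, deg e v != 1) -> forall v, deg e v = 2.
Proof.
move=> deg_pos sparse no_leaf v; have := sum_deg_sub2_le_leaves deg_pos sparse.
have -> : [set v | deg e v == 1] = set0 by apply/setP => w; rewrite !inE (negbTE (no_leaf w)).
rewrite cards0 (bigD1 v) //=; have := deg_pos v; have := no_leaf v; lia.
Qed.

End Counting.

Section Shapes.
Variables (T : finType) (e : rel T).
Hypotheses (e_sym : symmetric e) (e_irr : irreflexive e).

Lemma deg_star_leaf c y : is_star e c -> y != c -> deg e y = 1.
Proof.
move=> star_c yc; rewrite /deg -(cards1 c); apply: eq_card => z.
by rewrite !inE star_c (negbTE yc) andbT; case: eqVneq => // ->.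
Qed.

Lemma deg_star_center c : is_star e c -> deg e c = #|T|.-1.
Proof.
move=> star_c; rewrite /deg -(cardsC1 c); apply: eq_card => z.
by rewrite !inE star_c eqxx andbF orbF eq_sym.
Qed.

Lemma no_dm3_star c p q r : is_star e c -> 1 < deg e c -> ~ dm3 e p q r.
Proof.
move=> star_c deg_c [[pq pr qr] epq eqr M]; have [qc|qc] := eqVneq q c.
- subst q; have := deg_star_leaf star_c pq; rewrite eq_sym in qr.
  by have := deg_star_leaf star_c qr; rewrite /mono3 in M; lia.
- rewrite e_sym in epq; have := deg1_nbr (deg_star_leaf star_c qc) epq eqr.
  by move=> rp; rewrite rp eqxx in pr.
Qed.

Hypothesis e_conn : connected e.

Lemma connected_closed (P : pred T) x0 : P x0 ->
  (forall a b, P a -> e a b -> P b) -> forall y, P y.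
Proof.
move=> P_x0 P_closed y; have /connectP [p p_path ->] := e_conn x0 y.
elim: p x0 P_x0 p_path => [|z p IH] x0 //= P_x0 /andP [ex0z p_path].
exact: IH (P_closed _ _ P_x0 ex0z) p_path.
Qed.

Lemma deg_gt0_conn p q : e p q -> forall v, 0 < deg e v.
Proof.
move=> epq v; have [->|vp] := eqVneq v p; first exact: deg_gt0 epq.
have /connectP [[|z s] /= path_vp last_vp] := e_conn v p; first by rewrite last_vp eqxx in vp.
by case/andP: path_vp => /deg_gt0.
Qed.

Lemma leaf_pair_component b w : deg e b = 1 -> deg e w = 1 -> e b w ->
  forall z, (z == b) || (z == w).
Proof.
move=> b_leaf w_leaf ebw.
apply: connected_closed (_ : (b == b) || _) _ => [|x y]; first by rewrite eqxx.
by case/orP => /eqP -> exy; rewrite ?(deg1_nbr b_leaf ebw exy) ?eqxx ?orbT //;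
  rewrite e_sym in ebw; rewrite (deg1_nbr w_leaf ebw exy) eqxx.
Qed.

Lemma leaf_nbr_gt1 b w a : deg e b = 1 -> e b w -> 1 < deg e a -> a != w -> 1 < deg e w.
Proof.
move=> b_leaf ebw a_deg aw; rewrite ltnNge; apply/negP => w_le1.
have ewb : e w b by rewrite e_sym.
have w_leaf : deg e w = 1 by have := deg_gt0 ewb; lia.
have := leaf_pair_component b_leaf w_leaf ebw a; rewrite (negbTE aw) orbF => /eqP ab.
by move: a_deg; rewrite ab b_leaf.
Qed.

Lemma path3_component b w c : deg e b = 1 -> e b w -> deg e w = 2 -> e w c ->
  deg e c = 1 -> b != c -> forall z, [|| z == b, z == w | z == c].
Proof.
move=> b_leaf ebw w_deg ewc c_leaf bc.
apply: connected_closed (_ : [|| b == b, _ | _]) _ => [|x y]; first by rewrite eqxx.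
have ewb : e w b by rewrite e_sym.
have ecw : e c w by rewrite e_sym.
case/or3P => /eqP -> exy.
- by rewrite (deg1_nbr b_leaf ebw exy) eqxx orbT.
- by case: (deg2_nbr w_deg ewb ewc bc exy) => ->; rewrite eqxx ?orbT.
- by rewrite (deg1_nbr c_leaf ecw exy) eqxx !orbT.
Qed.

Lemma star_of_leaves x : (forall y, y != x -> deg e y = 1) -> is_star e x.
Proof.
move=> leaves.
have leaf_x y : y != x -> e y x.
  move=> yx; have y_leaf := leaves _ yx.
  have [z eyz] : exists z, e y z by apply: exists_nbr; rewrite y_leaf.
  have [zx|zx] := eqVneq z x; first by rewrite -zx.
  have := leaf_pair_component y_leaf (leaves _ zx) eyz x.
  by rewrite eq_sym (negbTE yx) eq_sym (negbTE zx).
move=> a b; apply/idP/idP.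
- move=> eab; have [ax|ax] /= := eqVneq a x.
  + by subst a; rewrite andbF orbF eq_sym (adj_neq e_irr eab).
  + by rewrite (deg1_nbr (leaves _ ax) (leaf_x _ ax) eab) eqxx.
- by case/orP => /andP [/eqP -> bx]; [rewrite e_sym|]; apply: leaf_x.
Qed.

Lemma K3_of_triangle a b c : e a b -> e a c -> e b c ->
  deg e a = 2 -> deg e b = 2 -> deg e c = 2 -> is_K3 e.
Proof.
move=> eab eac ebc a_deg b_deg c_deg.
have [ab ac bc] := And3 (adj_neq e_irr eab) (adj_neq e_irr eac) (adj_neq e_irr ebc).
have [eba eca ecb] : [/\ e b a, e c a & e c b] by rewrite e_sym eab e_sym eac e_sym.
have abc z : [|| z == a, z == b | z == c].
  apply: (connected_closed (P := fun z => [|| z == a, z == b | z == c]) (x0 := a))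
    => [|x y]; first by rewrite eqxx.
  case/or3P => /eqP -> exy.
  - by case: (deg2_nbr a_deg eab eac bc exy) => ->; rewrite eqxx ?orbT.
  - by case: (deg2_nbr b_deg eba ebc ac exy) => ->; rewrite eqxx ?orbT.
  - by case: (deg2_nbr c_deg eca ecb ab exy) => ->; rewrite eqxx ?orbT.
split.
- rewrite -cardsT (_ : [set: T] = [set a; b; c]).
    by rewrite -setUA cardsU1 cards2 bc !inE (negbTE ab) (negbTE ac).
  by apply/setP => z; rewrite !inE; case/or3P: (abc z) => ->; rewrite ?orbT.
- move=> x y; case/or3P: (abc x) => /eqP ->; case/or3P: (abc y) => /eqP ->;
  by rewrite ?e_irr ?eqxx ?eab ?eac ?ebc ?eba ?eca ?ecb ?ab ?ac ?bc 1?eq_sym ?ab ?ac ?bc.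
Qed.

End Shapes.

Section Saturated.
Variables (T : finType) (e : rel T).
Hypotheses (e_sym : symmetric e) (e_irr : irreflexive e) (e_sat : saturated e).

Lemma saturated_weak_max_leaf z b w : 2 <= mp e <= 3 ->
  deg e b = 1 -> e b w -> 2 < deg e w ->
  1 < deg e z -> (forall y, e z y -> deg e y <= deg e z) -> z != w -> False.
Proof.
move=> mp23 b_leaf ebw w_deg z_deg z_max zw.
have zb : z != b by apply: contraTneq z_deg => ->; rewrite b_leaf.
have zb_nadj : ~~ e z b.
  by apply: contra zw; rewrite e_sym => /(deg1_nbr b_leaf ebw) ->.
have b_lt_z : deg e b < deg e z by rewrite b_leaf.
have := e_sat zb zb_nadj; rewrite ltnNge (mp_add_edge_ext e_sym zb zb_nadj) //.
- by left; apply: add_edge_strict_max.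
- right; apply: add_edge_strict_min => // y eby.
  by rewrite (deg1_nbr b_leaf ebw eby) b_leaf.
Qed.

End Saturated.

Section MpTwo.
Variables (T : finType) (e : rel T).
Hypotheses (e_sym : symmetric e) (e_irr : irreflexive e) (e_conn : connected e).
Hypotheses (e_sat : saturated e) (e_sparse : nedges e <= #|T|) (mp2 : mp e = 2).

Lemma mp2_deg_gt0 v : 0 < deg e v.
Proof.
have [[|p [|q [|? ?]]] dms] // := exists_dm_path_mp e; rewrite mp2 // => _.
by case/and3P: dms => _ /andP [epq _] _; apply: deg_gt0_conn epq v.
Qed.

Lemma mp2_nbr_lt q p r : e q p -> e q r -> p != r -> deg e p <= deg e q -> deg e r < deg e q.
Proof.
move=> eqp eqr pr pq; rewrite ltnNge; apply/negP => qr.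
suff /mp_ge3 : dm3 e p q r by rewrite mp2.
split=> //; last by left.
- by rewrite eq_sym (adj_neq e_irr eqp) pr (adj_neq e_irr eqr).
- by rewrite e_sym.
Qed.

Lemma mp2_weak_max a p : e a p -> deg e p <= deg e a ->
  forall y, e a y -> deg e y <= deg e a.
Proof.
move=> eap pa y eay; have [->//|yp] := eqVneq y p.
by apply/ltnW/(mp2_nbr_lt eap eay) => //; rewrite eq_sym.
Qed.

Lemma mp2_exists_leaf (x : T) : exists b, deg e b = 1.
Proof.
have [b /eqP|no_leaf] := pickP (fun b => deg e b == 1); first by exists b.
have deg2 := deg2_of_no_leaf e_irr mp2_deg_gt0 e_sparse (fun v => negbT (no_leaf v)).
have [p exp] := exists_nbr (mp2_deg_gt0 x).
have [r exr] : exists2 r, e x r & r != p by apply: exists_nbr_neq; rewrite deg2.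
rewrite eq_sym => pr.
by have := mp2_nbr_lt exp exr pr; rewrite !deg2 ltnn => /(_ (leqnn 2)).
Qed.

Lemma mp2_leaf_nbr_gt2 b w a : deg e b = 1 -> e b w -> 1 < deg e a -> a != w ->
  2 < deg e w.
Proof.
move=> b_leaf ebw a_deg aw; have w_deg := leaf_nbr_gt1 e_sym e_conn b_leaf ebw a_deg aw.
rewrite ltnNge; apply/negP => w_le2.
have ewb : e w b by rewrite e_sym.
have bw : deg e b <= deg e w by rewrite b_leaf ltnW.
have [c ewc] := exists_nbr_neq b w_deg; rewrite eq_sym => bc.
have c_leaf : deg e c = 1.
  by have := mp2_nbr_lt ewb ewc bc bw; have := mp2_deg_gt0 c; lia.
have w_deg2 : deg e w = 2 by lia.
have := path3_component e_sym e_conn b_leaf ebw w_deg2 ewc c_leaf bc a.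
by rewrite (negbTE aw) /= => /orP [] /eqP ab; move: a_deg; rewrite ab ?b_leaf ?c_leaf.
Qed.

Lemma mp2_leaves_off_max x : (forall y, deg e y <= deg e x) ->
  forall y, y != x -> deg e y = 1.
Proof.
move=> x_max y yx; have [x_le1|x_deg] := leqP (deg e x) 1.
  by have := mp2_deg_gt0 y; have := x_max y; lia.
apply/eqP/negPn/negP => y_nleaf.
have [a ax a_max] : exists2 a, a != x & forall z, z != x -> deg e z <= deg e a.
  by exists [arg max_(a > y | a != x) deg e a]; case: arg_maxnP.
have a_deg : 1 < deg e a by have := a_max _ yx; have := mp2_deg_gt0 y; lia.
have a_wmax : forall z, e a z -> deg e z <= deg e a.
  by have [p eap px] := exists_nbr_neq x a_deg; apply: mp2_weak_max eap (a_max _ px).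
have [b b_leaf] := mp2_exists_leaf x.
have [w ebw] := exists_nbr (mp2_deg_gt0 b).
have mp23 : 2 <= mp e <= 3 by rewrite mp2.
have [wx|wx] := eqVneq w x.
- have aw : a != w by rewrite wx.
  have w_deg3 := mp2_leaf_nbr_gt2 b_leaf ebw a_deg aw.
  exact: (saturated_weak_max_leaf e_sym e_irr e_sat mp23 b_leaf ebw w_deg3 a_deg a_wmax aw).
- have xw : x != w by rewrite eq_sym.
  have w_deg3 := mp2_leaf_nbr_gt2 b_leaf ebw x_deg xw.
  by apply: (saturated_weak_max_leaf e_sym e_irr e_sat mp23 b_leaf ebw w_deg3 x_deg _ xw).
Qed.

Lemma star_of_mp2 : exists c, is_star e c.
Proof.
have /card_gt0P [p _] : 0 < #|T| by have := mp_le_card e; rewrite mp2; lia.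
have [x x_max] := exists_max_deg e p; exists x.
apply: (star_of_leaves e_sym e_irr e_conn) => y; exact: mp2_leaves_off_max.
Qed.

Lemma mp2_star_add_edge c u v : is_star e c -> u != v -> ~~ e u v ->
  mp (add_edge e u v) = 3.
Proof.
move=> star_c uv uv_nadj.
have leaf_c y : y != c -> e y c by move=> yc; rewrite star_c eqxx yc orbT.
have uc : u != c by apply: contraNneq uv_nadj => uc; rewrite e_sym uc leaf_c // -uc eq_sym.
have vc : v != c by apply: contraNneq uv_nadj => vc; rewrite vc leaf_c.
have mp_add_ge3 : 3 <= mp (add_edge e u v) by rewrite -mp2; exact: e_sat.
apply/eqP; rewrite eqn_leq mp_add_ge3 andbT leqNgt; apply/negP => mp_add_ge4.
have [p0 [p1 [p2 [p3 dmp]]]] := dm4_of_mp mp_add_ge4.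
have T_ge4 : 3 < #|T| by have := mp_le_card (add_edge e u v); lia.
suff /mp_ge4 : dm4 e p0 p1 p2 p3 by rewrite mp2.
apply: (dm4_add_edge_twin_leaves e_sym e_irr uv uv_nadj (deg_star_leaf star_c uc)
  (deg_star_leaf star_c vc) (leaf_c _ uc) (leaf_c _ vc) _ dmp).
move=> y ecy; have yc : y != c by rewrite eq_sym (adj_neq e_irr ecy).
by rewrite (deg_star_leaf star_c yc) (deg_star_center star_c); lia.
Qed.

End MpTwo.

Section MpThree.
Variables (T : finType) (e : rel T).
Hypotheses (e_sym : symmetric e) (e_irr : irreflexive e) (e_conn : connected e).
Hypotheses (e_sat : saturated e) (e_sparse : nedges e <= #|T|) (mp3 : mp e = 3).

Lemma mp3_no_dm4 a b c d : ~ dm4 e a b c d.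
Proof. by move/mp_ge4; rewrite mp3. Qed.

Lemma mp3_dm4_add_edge u v : u != v -> ~~ e u v ->
  exists a b c d, dm4 (add_edge e u v) a b c d.
Proof. by move=> uv uv_nadj; apply: dm4_of_mp; rewrite -mp3; apply: e_sat. Qed.

Lemma mp3_dm3 : exists a b c, dm3 e a b c.
Proof. by apply: dm3_of_mp; rewrite mp3. Qed.

Lemma mp3_deg_gt0 v : 0 < deg e v.
Proof. by have [a [b [c [_ eab _ _]]]] := mp3_dm3; apply: deg_gt0_conn eab v. Qed.

Lemma K3_of_no_leaf : (forall v, deg e v != 1) -> is_K3 e.
Proof.
move=> no_leaf; have deg2 := deg2_of_no_leaf e_irr mp3_deg_gt0 e_sparse no_leaf.
have deg_gt1 v : 1 < deg e v by rewrite deg2.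
have [a [p _]] := mp3_dm3.
have [b epb] := exists_nbr (mp3_deg_gt0 p).
have [c epc cb] := exists_nbr_neq b (deg_gt1 p).
have [d ebd dp] := exists_nbr_neq p (deg_gt1 b).
have [dc|dc] := eqVneq d c; first by subst d; apply: (K3_of_triangle e_sym e_irr e_conn epb epc).
exfalso; apply: (@mp3_no_dm4 c p b d); split; last by rewrite /mono4 !deg2; left.
- by rewrite e_sym in epc; rewrite (adj_neq e_irr epc) cb eq_sym.
- by rewrite (adj_neq e_irr epb) (adj_neq e_irr ebd) eq_sym.
- by rewrite e_sym.
Qed.

Lemma mp3_pendant_end_weak_max b w u : deg e b = 1 -> e b w -> deg e w = 2 -> e w u ->
  1 < deg e u -> forall y, e u y -> deg e y <= deg e u.
Proof.
move=> b_leaf ebw w_deg2 ewu u_deg y euy; rewrite leqNgt; apply/negP => uy.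
have ub_nadj : ~~ e u b.
  rewrite e_sym; apply/negP => ebu.
  by move: (adj_neq e_irr ewu); rewrite (deg1_nbr b_leaf ebw ebu) eqxx.
apply: (@mp3_no_dm4 b w u y); split.
- split; [exact: (adj_neq e_irr ebw) | | by apply: contraNneq ub_nadj => ->].
  by apply: contraTneq u_deg => <-; rewrite b_leaf.
- split; [exact: (adj_neq e_irr ewu) | | exact: (adj_neq e_irr euy)].
  by apply: contraTneq uy => <-; rewrite w_deg2 -leqNgt.
- by split.
- by rewrite /mono4 b_leaf w_deg2; left; do 2!split=> //; apply: ltnW.
Qed.

Lemma mp3_leaf_off_max x b : (forall y, deg e y <= deg e x) -> 1 < deg e x ->
  deg e b = 1 -> ~~ e x b -> False.
Proof.
move=> x_max x_deg b_leaf xb.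
have [w ebw] := exists_nbr (mp3_deg_gt0 b).
have xw : x != w by apply: contraNneq xb => ->; rewrite e_sym.
have bx : b != x by apply: contraTneq x_deg => <-; rewrite b_leaf.
have w_deg := leaf_nbr_gt1 e_sym e_conn b_leaf ebw x_deg xw.
have mp23 : 2 <= mp e <= 3 by rewrite mp3.
have [w_deg2|w_deg3] : deg e w = 2 \/ 2 < deg e w by lia.
  have [u ewu ub] := exists_nbr_neq b w_deg; have bu : b != u by rewrite eq_sym.
  have u_deg : 1 < deg e u.
    rewrite ltnNge; apply/negP => u_le1.
    have u_leaf : deg e u = 1 by have := mp3_deg_gt0 u; lia.
    have := path3_component e_sym e_conn b_leaf ebw w_deg2 ewu u_leaf bu x.
    rewrite !(eq_sym x) (negbTE bx) eq_sym (negbTE xw) /= => /eqP ux.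
    by move: x_deg; rewrite -ux u_leaf.
  have ub_nadj : ~~ e u b.
    rewrite e_sym; apply/negP => ebu.
    by move: (adj_neq e_irr ewu); rewrite (deg1_nbr b_leaf ebw ebu) eqxx.
  have u_wmax := mp3_pendant_end_weak_max b_leaf ebw w_deg2 ewu u_deg.
  have [p0 [p1 [p2 [p3 dmp]]]] := mp3_dm4_add_edge ub ub_nadj.
  exact: mp3_no_dm4 (dm4_add_edge_pendant e_sym e_irr ub ub_nadj b_leaf ebw w_deg2 ewu
    u_wmax u_deg dmp).
exact: (saturated_weak_max_leaf e_sym e_irr e_sat mp23 b_leaf ebw w_deg3 x_deg _ xw).
Qed.

Lemma mp3_leaves_at_max_deg2 x b : (forall y, deg e y <= deg e x) -> deg e x = 2 ->
  deg e b = 1 -> (forall y, deg e y = 1 -> e x y) -> False.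
Proof.
move=> x_max x_deg2 b_leaf leaves_x.
have exb := leaves_x _ b_leaf; have ebx : e b x by rewrite e_sym.
have [y exy yb] : exists2 y, e x y & y != b by apply: exists_nbr_neq; rewrite x_deg2.
have by' : b != y by rewrite eq_sym.
have [y_leaf|y_nleaf] := eqVneq (deg e y) 1.
  have comp := path3_component e_sym e_conn b_leaf ebx x_deg2 exy y_leaf by'.
  have star_x : is_star e x.
    apply: (star_of_leaves e_sym e_irr e_conn) => z zx.
    by case/or3P: (comp z) => /eqP E; rewrite E ?eqxx // in zx *.
  have [p [q [r dmp]]] := mp3_dm3.
  by apply: (no_dm3_star e_sym star_x _ dmp); rewrite x_deg2.
have y_deg2 : deg e y = 2 by have := x_max y; have := mp3_deg_gt0 y; lia.
have [z eyz zx] : exists2 z, e y z & z != x by apply: exists_nbr_neq; rewrite y_deg2.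
have zb : z != b.
  apply: contraTneq eyz => ->; rewrite e_sym; apply/negP => eby.
  by move: (adj_neq e_irr exy); rewrite (deg1_nbr b_leaf ebx eby) eqxx.
have z_deg2 : deg e z = 2.
  have [z_leaf|] := eqVneq (deg e z) 1.
    case: (deg2_nbr x_deg2 exb exy by' (leaves_x _ z_leaf)) => E; subst z.
    - by rewrite eqxx in zb.
    - by rewrite e_irr in eyz.
  by have := x_max z; have := mp3_deg_gt0 z; rewrite x_deg2; lia.
apply: (@mp3_no_dm4 b x y z); split.
- by split; rewrite // eq_sym ?(negbT zb) ?(adj_neq e_irr exb).
- by split; rewrite ?(adj_neq e_irr exy) ?(adj_neq e_irr eyz) 1?eq_sym.
- by split.
- by rewrite /mono4 b_leaf x_deg2 y_deg2 z_deg2; left.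
Qed.

Section LeavesAtMax.
Variables (x b0 : T).
Hypothesis x_deg : 2 < deg e x.
Hypotheses (b0_leaf : deg e b0 = 1) (leaves_x : forall y, deg e y = 1 -> e x y).
Hypothesis climb : forall a, a != x -> 1 < deg e a -> exists2 y, e a y & deg e a < deg e y.

Local Notation L := [set v | deg e v == 1].
Local Notation J := [set y | e x y & deg e y != 1].
Local Notation excess := (\sum_(v | v != x) (deg e v - 2)).

Lemma leaf_nbr_eq_max l z : deg e l = 1 -> e l z -> z = x.
Proof. by move=> l_leaf elz; apply: (deg1_nbr l_leaf _ elz); rewrite e_sym; apply: leaves_x. Qed.

Lemma deg_max_leaves_inner : deg e x = #|L| + #|J|.
Proof.
rewrite /deg -(cardsID L [set y | e x y]); congr (_ + _).
- by apply: eq_card => y; rewrite !inE andbC; case: eqP => //= /leaves_x.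
- by apply: eq_card => y; rewrite !inE andbC.
Qed.

(* Handshake with |E| <= |V|: the degrees exceed 2 in total by at most the number of
   leaves, and all leaves are neighbours of x. *)
Lemma excess_budget : #|J| + excess <= 2.
Proof.
have := sum_deg_sub2_le_leaves e_irr mp3_deg_gt0 e_sparse.
by rewrite (bigD1 x) //= deg_max_leaves_inner; lia.
Qed.

Lemma excess_ge v : v != x -> deg e v - 2 <= excess.
Proof. by move=> vx; rewrite (bigD1 v) //= leq_addr. Qed.

Lemma excess_ge2 v w : v != x -> w != x -> v != w -> deg e v - 2 + (deg e w - 2) <= excess.
Proof.
move=> vx wx vw; rewrite (bigD1 v) //= (bigD1 w) /=; last by rewrite wx eq_sym.
by rewrite addnA leq_addr.
Qed.

Lemma not_leaf_off_max v : ~~ e x v -> deg e v != 1.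
Proof. by apply: contra => /eqP; apply: leaves_x. Qed.

Section InnerNeighbour.
Variable y1 : T.
Hypothesis y1J : y1 \in J.

Lemma excess_le1 : excess <= 1.
Proof.
have : 0 < #|J| by apply/card_gt0P; exists y1.
by have := excess_budget; lia.
Qed.

Lemma inner_neq_max : y1 != x.
Proof. by apply: contraTneq y1J => ->; rewrite inE e_irr. Qed.

Lemma deg_off_max_le3 v : v != x -> deg e v <= 3.
Proof. by move/excess_ge; have := excess_le1; lia. Qed.

Lemma deg3_inner v : v != x -> deg e v = 3 -> v = y1.
Proof.
move=> vx v_deg3.
have [t evt vt] : exists2 t, e v t & deg e v < deg e t by apply: climb; rewrite ?v_deg3.
have tx : t = x.
  apply/eqP/negPn/negP => /deg_off_max_le3 t_le3.
  by move: vt; rewrite v_deg3 ltnNge t_le3.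
subst t; apply/eqP; apply: contraTT excess_budget => vy1; rewrite -ltnNge.
have vJ : v \in J by rewrite inE e_sym evt v_deg3.
have : 1 < #|J| by apply/card_gt1P; exists v, y1.
by have := excess_ge vx; rewrite v_deg3; lia.
Qed.

Section InnerDeg3.
Hypothesis y1_deg3 : deg e y1 = 3.

Lemma inner_unique v : v \in J -> v = y1.
Proof.
move=> vJ; apply/eqP; apply: contraTT excess_budget => vy1; rewrite -ltnNge.
have : 1 < #|J| by apply/card_gt1P; exists v, y1.
have := excess_ge inner_neq_max.
by rewrite y1_deg3; lia.
Qed.

Lemma deg_off_inner_le2 v : v != x -> v != y1 -> deg e v <= 2.
Proof.
move=> vx vy1; have := excess_ge2 vx inner_neq_max vy1; have := excess_le1.
by rewrite y1_deg3; lia.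
Qed.

Lemma climb_to_inner v : v != x -> v != y1 -> 1 < deg e v -> e v y1.
Proof.
move=> vx vy1 v_deg; have [t evt vt] := climb vx v_deg.
have [tx|tx] := eqVneq t x.
  subst t; have vJ : v \in J by rewrite inE e_sym evt; apply: contraTneq v_deg => ->.
  by rewrite (inner_unique vJ) eqxx in vy1.
suff <- : t = y1 by [].
apply: (deg3_inner tx); have := deg_off_max_le3 tx; have := deg_off_inner_le2 vx vy1; lia.
Qed.

End InnerDeg3.

Lemma inner_climb_path y' : e y1 y' -> y' != x -> ~~ e x y' -> False.
Proof.
move=> ey1y' y'x xy'; have y1x := inner_neq_max.
have exy1 : e x y1 by move: y1J; rewrite inE => /andP [].
have y'y1 : y' != y1 by rewrite eq_sym (adj_neq e_irr ey1y').
have y'_deg : 1 < deg e y'.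
  by have := not_leaf_off_max xy'; have := mp3_deg_gt0 y'; lia.
have [z ey'z y'z] := climb y'x y'_deg.
have zx : z != x by apply: contraNneq xy' => <-; rewrite e_sym.
have z_deg3 : deg e z = 3.
  by apply/eqP; rewrite eqn_leq deg_off_max_le3 //; apply: leq_ltn_trans y'_deg y'z.
have zy1 := deg3_inner zx z_deg3; subst z.
have y'_deg2 : deg e y' = 2 by have := deg_off_inner_le2 z_deg3 y'x y'y1; lia.
have [r ey'r ry1] := exists_nbr_neq y1 y'_deg.
have rx : r != x by apply: contraNneq xy' => <-; rewrite e_sym.
have r_deg : 1 < deg e r.
  have r_nleaf : deg e r != 1.
    have ery' : e r y' by rewrite e_sym.
    by apply/eqP => r_leaf; move: y'x; rewrite (leaf_nbr_eq_max r_leaf ery') eqxx.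
  by rewrite ltn_neqAle eq_sym r_nleaf mp3_deg_gt0.
have r_deg2 : deg e r = 2.
  by apply/eqP; rewrite eqn_leq deg_off_inner_le2 // r_deg.
have ery1 := climb_to_inner z_deg3 rx ry1 r_deg.
apply: (@mp3_no_dm4 y' r y1 x); split.
- by split; rewrite // (adj_neq e_irr ey'r).
- by split; rewrite // eq_sym.
- by split=> //; rewrite e_sym.
- by rewrite /mono4 y'_deg2 r_deg2 z_deg3; left; do 2!split=> //; rewrite -z_deg3.
Qed.

Section Triangle.
Variable y' : T.
Hypotheses (ey1y' : e y1 y') (exy' : e x y').

Lemma triangle_inner : [/\ deg e y1 = 2, deg e y' = 2 & J = [set y1; y']].
Proof.
have y1x := inner_neq_max; have y1y' := adj_neq e_irr ey1y'.
have y'J : y' \in J.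
  rewrite inE exy'; apply/eqP => y'_leaf; have ey'y1 : e y' y1 by rewrite e_sym.
  by move: y1x; rewrite (leaf_nbr_eq_max y'_leaf ey'y1) eqxx.
have J2 : 1 < #|J| by apply/card_gt1P; exists y1, y'.
have excess0 : excess = 0 by have := excess_budget; lia.
have deg2 v : v \in J -> deg e v = 2.
  rewrite inE => /andP [exv v_nleaf]; have vx : v != x by rewrite eq_sym (adj_neq e_irr exv).
  by have := excess_ge vx; rewrite excess0; have := mp3_deg_gt0 v; lia.
split; [exact: deg2 | exact: deg2 |].
apply/eqP; rewrite eq_sym eqEcard cards2 y1y'; apply/andP; split.
- by apply/subsetP => v /set2P [] ->.
- by have := excess_budget; lia.
Qed.

Lemma triangle_component z : [|| z == x, z == y1, z == y' | deg e z == 1].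
Proof.
have [y1_deg2 y'_deg2 J_eq] := triangle_inner.
have ey1x : e y1 x by move: y1J; rewrite inE e_sym => /andP [].
have [ey'x ey'y1] : e y' x /\ e y' y1 by rewrite !(e_sym y').
have xy1 : x != y1 by rewrite eq_sym inner_neq_max.
have xy' := adj_neq e_irr exy'.
apply: (connected_closed e_conn (P := fun z => [|| z == x, z == y1, z == y' | deg e z == 1])
  (x0 := x)) => [|a b]; first by rewrite eqxx.
case/or4P => /eqP; [move=> -> exb | move=> -> eab | move=> -> eab | move=> a_leaf eab].
- have [b_leaf|b_nleaf] := eqVneq (deg e b) 1; first by rewrite !orbT.
  have : b \in J by rewrite inE exb b_nleaf.
  by rewrite J_eq => /set2P [] ->; rewrite eqxx ?orbT.
- by case: (deg2_nbr y1_deg2 ey1x ey1y' xy' eab) => ->; rewrite eqxx ?orbT.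
- by case: (deg2_nbr y'_deg2 ey'x ey'y1 xy1 eab) => ->; rewrite eqxx ?orbT.
- by rewrite (leaf_nbr_eq_max a_leaf eab) eqxx.
Qed.

Lemma triangle_deg_max : deg e x = #|L| + 2.
Proof.
have [_ _ J_eq] := triangle_inner.
by rewrite deg_max_leaves_inner J_eq cards2 (adj_neq e_irr ey1y').
Qed.

Lemma triangle_paw : #|L| <= 1 -> False.
Proof.
move=> L1; have [y1_deg2 y'_deg2 _] := triangle_inner.
have b0L : b0 \in L by rewrite inE b0_leaf.
have leaf_b0 z : deg e z = 1 -> z = b0.
  by move=> z_leaf; move/card_le1_eqP: L1; apply; rewrite // inE z_leaf.
have x_deg3 : deg e x = 3.
  have : 0 < #|L| by apply/card_gt0P; exists b0.
  by rewrite triangle_deg_max; lia.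
have y1x := inner_neq_max; have xy1 : x != y1 by rewrite eq_sym.
have xb0 : x != b0 by apply/eqP => xb0; move: x_deg; rewrite xb0 b0_leaf.
have y1b0 : y1 != b0 by apply/eqP => E; move: y1_deg2; rewrite E b0_leaf.
have y'y1 : y' != y1 by rewrite eq_sym (adj_neq e_irr ey1y').
have y'b0 : y' != b0 by apply/eqP => E; move: y'_deg2; rewrite E b0_leaf.
have y1b0_nadj : ~~ e y1 b0.
  by rewrite e_sym; apply/negP => /(leaf_nbr_eq_max b0_leaf) y1x'; rewrite y1x' eqxx in y1x.
have [p0 [p1 [p2 [p3 dmp]]]] := mp3_dm4_add_edge y1b0 y1b0_nadj.
apply: (no_dm4_two_non_minima (@add_edge_sym _ _ y1 b0 e_sym) (x := x) (y := y1) _ dmp) => z.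
case/or4P: (triangle_component z) => /eqP;
  [move=> ->; exact: Or31 | move=> ->; exact: Or32 | move=> -> | move/leaf_b0 ->]; apply: Or33.
- move=> t /add_edge_old /(_ y'y1 y'b0) ey't.
  have [ey'x ey'y1] : e y' x /\ e y' y1 by rewrite !(e_sym y').
  rewrite !deg_add_edge // y'_deg2 (negbTE y'y1) (negbTE y'b0).
  by case: (deg2_nbr y'_deg2 ey'x ey'y1 xy1 ey't) => ->;
    rewrite ?eqxx ?x_deg3 ?y1_deg2 ?(negbTE xy1) ?(negbTE xb0).
- apply: add_edge_strict_min => //; last by rewrite b0_leaf y1_deg2.
  by move=> t /(leaf_nbr_eq_max b0_leaf) ->; rewrite b0_leaf x_deg3.
Qed.

Lemma triangle_twin_leaves : 1 < #|L| -> False.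
Proof.
move=> /card_gt1P [a [c [aL cL ac]]]; have [y1_deg2 y'_deg2 J_eq] := triangle_inner.
have [b2 b2_leaf b0b2] : exists2 b2, deg e b2 = 1 & b0 != b2.
  rewrite !inE in aL cL; have [ab0|ab0] := eqVneq a b0.
  - by exists c; [exact/eqP | rewrite -ab0].
  - by exists a; [exact/eqP | rewrite eq_sym].
have [eb0x eb2x] : e b0 x /\ e b2 x by rewrite !(e_sym _ x) !leaves_x.
have b0b2_nadj : ~~ e b0 b2.
  by apply/negP => /(leaf_nbr_eq_max b0_leaf) b2x; move: x_deg; rewrite -b2x b2_leaf.
have [p0 [p1 [p2 [p3 dmp]]]] := mp3_dm4_add_edge b0b2 b0b2_nadj.
apply: (mp3_no_dm4 (dm4_add_edge_twin_leaves e_sym e_irr b0b2 b0b2_nadj b0_leaf b2_leaf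
  eb0x eb2x _ dmp)) => y exy.
have [y_leaf|y_nleaf] := eqVneq (deg e y) 1; first by rewrite y_leaf.
have : y \in J by rewrite inE exy y_nleaf.
have : 1 < #|L| by apply/card_gt1P; exists a, c.
rewrite J_eq triangle_deg_max addn2 !ltnS => L2 /set2P [] ->.
- by rewrite y1_deg2.
- by rewrite y'_deg2.
Qed.

Lemma triangle_false : False.
Proof. by case: (leqP #|L| 1); [apply: triangle_paw | apply: triangle_twin_leaves]. Qed.

End Triangle.

End InnerNeighbour.

Lemma leaves_at_max_false : False.
Proof.
have [J0|[y1 y1J]] := set_0Vmem J.
  have leaf_or_max v : (v == x) || (deg e v == 1).
    apply: (connected_closed e_conn (P := fun v => (v == x) || (deg e v == 1)) (x0 := x))
      => [|a b]; first by rewrite eqxx.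
    case/orP => [/eqP -> exb|/eqP a_leaf eab]; last by rewrite (leaf_nbr_eq_max a_leaf eab) eqxx.
    have [_|b_nleaf] := eqVneq (deg e b) 1; first by rewrite orbT.
    have : b \in J by rewrite inE exb b_nleaf.
    by rewrite J0 inE.
  have star_x : is_star e x.
    apply: (star_of_leaves e_sym e_irr e_conn) => v vx; apply/eqP.
    by case/orP: (leaf_or_max v) => // /eqP vx'; rewrite vx' eqxx in vx.
  have [p [q [r dmp]]] := mp3_dm3.
  by apply: (no_dm3_star e_sym star_x _ dmp); apply: ltnW.
have [exy1 y1_nleaf] : e x y1 /\ deg e y1 != 1 by move: y1J; rewrite inE => /andP.
have y1_deg : 1 < deg e y1 by rewrite ltn_neqAle eq_sym y1_nleaf mp3_deg_gt0.
have [y' ey1y' y'x] := exists_nbr_neq x y1_deg.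
have [exy'|xy'] := boolP (e x y'); first exact: (triangle_false y1J ey1y' exy').
exact: (inner_climb_path y1J ey1y' y'x xy').
Qed.

End LeavesAtMax.

Lemma K3_of_mp3 : is_K3 e.
Proof.
have [b0 /eqP b0_leaf|no_leaf] := pickP (fun v => deg e v == 1); last first.
  by apply: K3_of_no_leaf => v; rewrite no_leaf.
exfalso; have [x x_max] := exists_max_deg e b0.
have x_deg : 1 < deg e x.
  have [p [q [r [[_ pr _] epq eqr _]]]] := mp3_dm3.
  by apply: leq_trans (x_max q); apply: deg_ge2 eqr pr; rewrite e_sym.
have [b /andP [/eqP b_leaf xb]|leaves_x] := pickP (fun b => (deg e b == 1) && ~~ e x b).
  exact: mp3_leaf_off_max x_max x_deg b_leaf xb.
have {}leaves_x y : deg e y = 1 -> e x y.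
  by move=> y_leaf; move: (leaves_x y); rewrite /= y_leaf eqxx /= => /negbFE.
have [x_deg2|x_deg3] : deg e x = 2 \/ 2 < deg e x by lia.
  exact: mp3_leaves_at_max_deg2 x_max x_deg2 b0_leaf leaves_x.
have eb0x : e b0 x by rewrite e_sym leaves_x.
have [a /and3P [ax a_deg /forallP a_wmax]|climb] :=
  pickP (fun a => [&& a != x, 1 < deg e a & [forall y, e a y ==> (deg e y <= deg e a)]]).
  apply: (saturated_weak_max_leaf e_sym e_irr e_sat _ b0_leaf eb0x x_deg3 a_deg _ ax).
  - by rewrite mp3.
  - by move=> y; apply/implyP.
apply: (leaves_at_max_false x_deg3 b0_leaf leaves_x) => a ax a_deg.
have := climb a; rewrite /= ax a_deg /= => /negbT /forallPn [y].
by rewrite negb_imply -ltnNge => /andP [eay ay]; exists y.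
Qed.

End MpThree.

Theorem lemma3p2 (T : finType) (e : rel T) :
  simple_graph e -> connected e -> saturated e ->
  nedges e <= #|T| -> 2 <= mp e <= 3 ->
  (mp e = 2 ->
     (exists c : T, is_star e c) /\ 2 <= #|T| /\
     (3 <= #|T| ->
        forall u v : T, u != v -> ~~ e u v -> mp (add_edge e u v) = 3)) /\
  (mp e = 3 -> is_K3 e).
Proof.
move=> [e_sym e_irr] e_conn e_sat e_sparse _; split=> mpE; last exact: K3_of_mp3.
have [c star_c] := star_of_mp2 e_sym e_irr e_conn e_sat e_sparse mpE.
split; first by exists c.
split; first by rewrite -mpE mp_le_card.
by move=> _ u v; exact: mp2_star_add_edge.
Qed.
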